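(* Let $d\ge1$. Let $F:(0,\infty)\to\mathbb R$ be continuous and one-well, i.e. there is $r_0>0$ such that $F$ is strictly decreasing on $(0,r_0)$ and strictly increasing on $(r_0,\infty)$. Let $\rho:(0,\infty)\to[0,\infty)$ be continuous, strictly decreasing, with $\rho(r)=O(r^{-d-\eta})$ as $r\to\infty$ for some $\eta>0$. Then for every $L\in\mathcal L_d(1)$ the function $\lambda\mapsto F(E_\rho[\lambda L])$ has a unique minimizer $\lambda^{F,\rho}_L>0$ on $(0,\infty)$, and $F(E_\rho[\lambda^{F,\rho}_L L])=\min F=F(r_0)$. Furthermore, if $L_d\in\mathcal L_d(1)$ is the unique (up to isometries) minimizer on $\mathcal L_d(1)$ of $L\mapsto E_\rho[\lambda^{F,\rho}_{L_d}L]$, then $L_d$ is the unique (up to isometries) minimizer on $\mathcal L_d(1)$ of $L\mapsto\lambda^{F,\rho}_L$.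
   Context: $\mathcal L_d$ denotes the set of all lattices $L=\bigoplus_{i=1}^d\mathbb Z u_i$ with $\{u_i\}$ a basis of $\mathbb R^d$, and $\mathcal L_d(1)\subset\mathcal L_d$ the lattices with $|\det(u_1,\dots,u_d)|=1$. For a function $f:(0,\infty)\to\mathbb R$ with $|f(r)|=O(r^{-d-\eta})$ as $r\to\infty$ for some $\eta>0$, $E_f[L]:=\sum_{q\in L\setminus\{0\}}f(|q|)$. Uniqueness of minimizers among lattices is understood up to isometries. *)

From HB Require Import structures.
From mathcomp Require Import all_boot all_order all_algebra.
From mathcomp Require Import all_classical all_reals all_analysis.
Set Implicit Arguments. Unset Strict Implicit. Unset Printing Implicit Defensive.
Import Order.TTheory GRing.Theory Num.Theory.
Import numFieldNormedType.Exports.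
Local Open Scope classical_set_scope.
Local Open Scope ring_scope.

Section Lattices.
Variables (R : realType) (d : nat).

Definition enorm (q : 'rV[R]_d) : R := Num.sqrt (\sum_(i < d) q 0 i ^+ 2).

(* The lattice Z u_1 + ... + Z u_d spanned by the rows u_i of M. *)
Definition lattice_of (M : 'M[R]_d) : set 'rV[R]_d :=
  [set q | exists k : 'rV[int]_d, q = map_mx (fun z : int => z%:~R) k *m M].

Definition is_lattice (L : set 'rV[R]_d) : Prop :=
  exists M : 'M[R]_d, M \in unitmx /\ L = lattice_of M.

(* L is in \mathcal L_d(1) : spanned by a basis with |det| = 1. *)
Definition is_lattice1 (L : set 'rV[R]_d) : Prop :=
  exists M : 'M[R]_d, `|\det M| = 1 /\ L = lattice_of M.

Definition scale_set (lam : R) (L : set 'rV[R]_d) : set 'rV[R]_d :=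
  (fun q => lam *: q) @` L.

(* E_f[L] = sum_{q in L \ {0}} f(|q|); defined as the difference of the sums
   of positive and negative parts (absolutely convergent sum). *)
Definition Epot (f : R -> R) (L : set 'rV[R]_d) : R :=
  fine (\esum_(q in L `\ 0) ((Num.max (f (enorm q)) 0)%:E))
  - fine (\esum_(q in L `\ 0) ((Num.max (- f (enorm q)) 0)%:E)).

Definition isometric (L L' : set 'rV[R]_d) : Prop :=
  exists Q : 'M[R]_d, Q *m Q^T = 1%:M /\ L' = (fun q => q *m Q) @` L.

Definition unique_min_lattice1 (g : set 'rV[R]_d -> R) (Ld : set 'rV[R]_d) : Prop :=
  is_lattice1 Ld /\
  (forall L, is_lattice1 L -> g Ld <= g L) /\
  (forall L, is_lattice1 L -> g L = g Ld -> isometric Ld L).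

End Lattices.

From HB Require Import structures.
From mathcomp Require Import all_boot all_order all_algebra.
From mathcomp Require Import all_classical all_reals all_analysis.
From mathcomp Require Import ring lra zify.
Set Implicit Arguments. Unset Strict Implicit. Unset Printing Implicit Defensive.
Import Order.TTheory GRing.Theory Num.Theory.
Import numFieldNormedType.Exports.
Local Open Scope classical_set_scope.
Local Open Scope ring_scope.

(* Write L = Z^d M.  Then E_rho[mu L] = sum_(k in Z^d \ 0) rho(mu |kM|), so
   the argument has three independent ingredients:
   1. Scaled series (section ScaledSeries): if n_t > 0 on an index set I and
      sum_t rho(a n_t) < oo for all a > 0, then a |-> sum_t rho(a n_t) is a
      continuous, strictly decreasing bijection of (0,oo) onto itself, as soon
      as I has arbitrarily many points of bounded length and rho -> 0 at oo.
   2. Lattice sums (sections LatticeSeries to LatticeEnergy): the decay of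
      rho bounds rho(a|kM|) by a constant times prod_i (|k_i|+1)^(-s), where
      s = (d+eta)/d > 1,
      whose finite partial sums are bounded by Cauchy condensation; hence the
      lattice energy is such a scaled series.
   3. One-well functions (section OneWell): F has a strict global minimum at r0.
   Then lam_L is the unique mu > 0 with E_rho[mu L] = r0, and since E_rho is
   decreasing in the scaling, minimising L |-> E_rho[lam_Ld L] at Ld forces
   lam_Ld <= lam_L, with equality exactly at the minimisers (section Scaling). *)

Lemma sum_seq_const (R : numDomainType) (T : Type) (s : seq T) (c : R) :
  \sum_(t <- s) c = (size s)%:R * c.
Proof. by rewrite big_const_seq count_predT iter_addr_0 mulr_natl. Qed.

Lemma row_nz_coord (V : zmodType) (n : nat) (v : 'rV[V]_n) :
  v != 0 -> exists i, v 0 i != 0.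
Proof.
move=> v0; apply: contra_notP (negP v0) => hv; apply/eqP/matrixP => a b.
rewrite (ord1 a) mxE; apply/eqP/negPn/negP => hb; exact: hv (ex_intro _ b hb).
Qed.

Section DecreasingPotential.
Variables (R : realType) (rho : R -> R).
Hypothesis hrho0 : forall r, 0 < r -> 0 <= rho r.
Hypothesis hdec : forall x y, 0 < x -> x < y -> rho y < rho x.

Lemma rho_gt0 r : 0 < r -> 0 < rho r.
Proof.
move=> r0; apply: (le_lt_trans (@hrho0 (r + 1) _)); first lra.
by apply: hdec => //; lra.
Qed.

Lemma rho_le x y : 0 < x -> x <= y -> rho y <= rho x.
Proof.
move=> x0; rewrite le_eqVlt => /orP[/eqP -> //|xy].
exact/ltW/hdec.
Qed.

End DecreasingPotential.

(* Part 1: the scaled series G(a) = sum_(t in I) rho(a n_t). *)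
Section ScaledSeries.
Variables (R : realType) (T : choiceType) (I : set T) (n : T -> R) (rho : R -> R).
Hypothesis hn : forall t, I t -> 0 < n t.
Hypothesis hrho0 : forall r, 0 < r -> 0 <= rho r.
Hypothesis hdec : forall x y, 0 < x -> x < y -> rho y < rho x.
Hypothesis hsum : forall a, 0 < a -> (\esum_(t in I) (rho (a * n t))%:E < +oo)%E.

Local Notation S a := (\esum_(t in I) (rho (a * n t))%:E)%E.
Local Notation tail a s := (\esum_(t in I `&` ~` [set` s]) (rho (a * n t))%:E)%E.
Local Notation G a := (fine (S a)).

Lemma term_ge0 a t : 0 < a -> I t -> (0 <= (rho (a * n t))%:E)%E.
Proof. by move=> a0 It; rewrite lee_fin hrho0 // mulr_gt0 // hn. Qed.

Lemma S_fin a : 0 < a -> S a \is a fin_num.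
Proof.
move=> a0; rewrite ge0_fin_numE ?hsum //.
by apply: esum_ge0 => t It; apply: term_ge0.
Qed.

Lemma S_split a (s : seq T) : 0 < a -> uniq s -> (forall t, t \in s -> I t) ->
  S a = ((\sum_(t <- s) rho (a * n t))%:E + tail a s)%E.
Proof.
move=> a0 us sI; rewrite (esumID [set` s]); last by move=> t It; apply: term_ge0.
rewrite setIidr; last by move=> t /= /sI.
rewrite esum_fset ?finite_seq //; last by move=> t; rewrite inE => /sI; exact: term_ge0.
by rewrite -fsbig_seq // sumEFin.
Qed.

Lemma tail_ge0 a (s : seq T) : 0 < a -> (0 <= tail a s)%E.
Proof. by move=> a0; apply: esum_ge0 => t [It _]; apply: term_ge0. Qed.

Lemma partial_ge0 a (s : seq T) : 0 < a -> (forall t, t \in s -> I t) ->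
  0 <= \sum_(t <- s) rho (a * n t).
Proof.
move=> a0 sI; rewrite big_seq; apply: sumr_ge0 => t /sI It.
by apply: hrho0; rewrite mulr_gt0 // hn.
Qed.

Lemma tail_fin a (s : seq T) : 0 < a -> uniq s -> (forall t, t \in s -> I t) ->
  tail a s \is a fin_num.
Proof.
move=> a0 us sI; rewrite ge0_fin_numE ?tail_ge0 //.
have h := @hsum a a0; rewrite (S_split a0 us sI) in h.
apply: le_lt_trans h; by rewrite leeDr // lee_fin partial_ge0.
Qed.

Lemma tail_small a e : 0 < a -> 0 < e -> exists s, [/\ uniq s,
  (forall t, t \in s -> I t) & (tail a s < e%:E)%E].
Proof.
move=> a0 e0; have fin := S_fin a0.
have : ((fine (S a) - e)%:E < S a)%E.
  by rewrite -[X in (_ < X)%E](fineK fin) lte_fin; lra.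
move/ereal_sup_gt => [y [X [finX XI] <-]] hy.
set s := finmap.enum_fset (fset_set X).
have sI : forall t : T, t \in s -> I t.
  by move=> t; rewrite in_fset_set // inE => /XI.
exists s; split; [exact: finmap.fset_uniq | exact: sI |].
move: hy; rewrite fsbig_finite // sumEFin.
rewrite (S_split a0 (finmap.fset_uniq _) sI).
rewrite -(fineK (tail_fin a0 (finmap.fset_uniq _) sI)) -EFinD /= !lte_fin.
lra.
Qed.

Lemma G_split a (s : seq T) : 0 < a -> uniq s -> (forall t, t \in s -> I t) ->
  G a = \sum_(t <- s) rho (a * n t) + fine (tail a s).
Proof.
move=> a0 us sI; rewrite (S_split a0 us sI).
by rewrite -(fineK (tail_fin a0 us sI)) -EFinD.
Qed.

Lemma tailf_ge0 a (s : seq T) : 0 < a -> 0 <= fine (tail a s).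
Proof. by move=> a0; apply: fine_ge0; apply: tail_ge0. Qed.

Lemma tailf_le a b (s : seq T) : 0 < a -> a <= b -> uniq s ->
  (forall t, t \in s -> I t) -> fine (tail b s) <= fine (tail a s).
Proof.
move=> a0 ab us sI; apply: fine_le; [apply: tail_fin => //; lra|exact: tail_fin|].
apply: le_esum => t [It _]; rewrite lee_fin; apply: (rho_le hdec).
  by rewrite mulr_gt0 // hn.
by rewrite ler_wpM2r // ltW // hn.
Qed.

Hypothesis hI0 : exists t0, I t0.

Lemma G_split1 a : 0 < a -> exists2 t0, I t0 &
  G a = rho (a * n t0) + fine (tail a [:: t0]).
Proof.
move=> a0; have [t0 It0] := hI0; exists t0 => //.
have sI : forall t, t \in [:: t0] -> I t by move=> t; rewrite inE => /eqP ->.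
by rewrite (G_split a0 (isT : uniq [:: t0]) sI) big_seq1.
Qed.

(* G is positive and strictly decreasing: look at a single term rho(a n_t0). *)
Lemma G_gt0 a : 0 < a -> 0 < G a.
Proof.
move=> a0; have [t0 It0 ->] := G_split1 a0.
have := tailf_ge0 [:: t0] a0.
have := rho_gt0 hrho0 hdec (mulr_gt0 a0 (hn It0)); lra.
Qed.

Lemma G_decr a b : 0 < a -> a < b -> G b < G a.
Proof.
move=> a0 ab; have [t0 It0] := hI0.
have sI : forall t, t \in [:: t0] -> I t by move=> t; rewrite inE => /eqP ->.
have b0 : 0 < b by lra.
rewrite !(G_split _ (isT : uniq [:: t0]) sI) // !big_seq1.
have h1 : rho (b * n t0) < rho (a * n t0).
  by apply: hdec; [rewrite mulr_gt0 // hn | rewrite ltr_pM2r // hn].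
have := tailf_le a0 (ltW ab) (isT : uniq [:: t0]) sI; lra.
Qed.

Hypothesis hcont : {within `]0, +oo[, continuous rho}.

Lemma partial_cont (s : seq T) (x : R) : 0 < x -> (forall t, t \in s -> 0 < n t) ->
  {for x, continuous (fun y : R => \sum_(t <- s) rho (y * n t))}.
Proof.
move=> x0; elim: s => [|t s IH] hs.
  have -> : (fun y => \sum_(t <- [::]) rho (y * n t)) = (fun=> 0).
    by apply/funext => y; rewrite big_nil.
  exact: cvg_cst.
have -> : (fun y => \sum_(t0 <- t :: s) rho (y * n t0)) =
    (fun y => rho (y * n t) + \sum_(t0 <- s) rho (y * n t0)).
  by apply/funext => y; rewrite big_cons.
apply: cvgD; last by apply: IH => t' ht'; apply: hs; rewrite inE ht' orbT.
have nt0 : 0 < n t by apply: hs; rewrite inE eqxx.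
apply: (@continuous_comp R R R (fun y : R => y * n t) rho x).
  by apply: cvgMr_tmp; exact: cvg_id.
move: hcont; rewrite continuous_open_subspace; last exact: interval_open.
by apply; rewrite inE /= in_itv /= andbT mulr_gt0.
Qed.

(* Continuity: a finite partial sum is continuous and the tails are uniformly
   small on [x/2, oo). *)
Lemma G_cont (x : R) : 0 < x -> {for x, continuous (fun a : R => G a)}.
Proof.
move=> x0; apply/cvgrPdist_lt => e e0.
have a0 : 0 < x / 2 by lra.
have e3 : 0 < e / 3 by lra.
have [s [us sI ht]] := tail_small a0 e3.
have Pc := partial_cont x0 (fun t ts => hn (sI t ts)).
have P1 := cvgr_dist_lt _ _ Pc _ e3.
have P2 := cvgr_dist_lt _ _ (@cvg_id _ (nbhs x)) _ a0.
near=> y.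
have hy1 : `|\sum_(t <- s) rho (x * n t) - \sum_(t <- s) rho (y * n t)| < e / 3.
  by near: y; exact: P1.
have hy2 : `|x - y| < x / 2 by near: y; exact: P2.
move: hy2; rewrite ltr_distlC => /andP[hy2 hy3].
have y0 : 0 < y by lra.
rewrite (G_split x0 us sI) (G_split y0 us sI).
have htf : fine (tail (x / 2) s) < e / 3.
  by rewrite -lte_fin fineK //; apply: tail_fin.
have := tailf_le a0 (ltac:(lra) : x / 2 <= x) us sI.
have := tailf_le a0 (ltac:(lra) : x / 2 <= y) us sI.
have := tailf_ge0 s x0; have := tailf_ge0 s y0.
move: hy1; rewrite !ltr_norml => /andP[h1 h2].
move=> *; apply/andP; split; lra.
Unshelve. all: by end_near.
Qed.

Hypothesis hinf : forall N : nat, exists s : seq T, [/\ uniq s, size s = N,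
  (forall t, t \in s -> I t) & exists c, 0 < c /\ forall t, t \in s -> n t <= c].

(* G is unbounded near 0: N indices of length <= c contribute N rho(1) at a = 1/c. *)
Lemma G_small (r : R) : exists2 a, 0 < a & r < G a.
Proof.
have r1 := rho_gt0 hrho0 hdec (@ltr01 R).
pose N := Num.Def.archi_bound (`|r| / rho 1).
have hN : `|r| / rho 1 < N%:R by apply: archi_boundP; rewrite divr_ge0 // ltW.
have [s [us sz sI [c [c0 hc]]]] := hinf N.
have a0 : 0 < c^-1 by rewrite invr_gt0.
exists c^-1 => //; rewrite (G_split a0 us sI).
have hP : N%:R * rho 1 <= \sum_(t <- s) rho (c^-1 * n t).
  rewrite -sz -sum_seq_const big_seq [X in _ <= X]big_seq.
  apply: ler_sum => t ts; apply: (rho_le hdec); first by rewrite mulr_gt0 // hn //; apply: sI.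
  by rewrite mulrC ler_pdivrMr // mul1r hc.
have := tailf_ge0 s a0; move: hN; rewrite ltr_pdivrMr // => hN.
have := ler_norm r; lra.
Qed.

Lemma scale_above (q : R) (s : seq T) : 0 < q -> (forall t, t \in s -> 0 < n t) ->
  exists2 b, 1 <= b & forall t, t \in s -> q <= b * n t.
Proof.
move=> q0; elim: s => [|t s IH] hpos; first by exists 1.
have [b1 b11 hb1] := IH (fun t' h => hpos t' (ltac:(by rewrite inE h orbT))).
have nt0 : 0 < n t by apply: hpos; rewrite inE eqxx.
have qn : 0 < q / n t by rewrite divr_gt0.
exists (b1 + q / n t); first lra.
move=> t'; rewrite inE mulrDl => /orP[/eqP ->|h].
  rewrite divfK ?gt_eqF //; have : 0 <= b1 * n t by rewrite mulr_ge0 // ltW //; lra.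
  lra.
have : 0 <= q / n t * n t' by rewrite mulr_ge0 // ltW // hpos // inE h orbT.
have := hb1 _ h; lra.
Qed.

Hypothesis hlim : forall e, 0 < e -> exists r, 0 < r /\ rho r < e.

(* G tends to 0 at oo: fix a small tail at a = 1, then push the finitely many
   remaining terms below r / 2 by scaling. *)
Lemma G_large (r : R) : 0 < r -> exists2 b, 0 < b & G b < r.
Proof.
move=> r0; have r2 : 0 < r / 2 by lra.
have [s [us sI ht]] := tail_small (@ltr01 R) r2.
pose k : R := (size s)%:R.
have k0 : 0 <= k by rewrite /k ler0n.
have eps0 : 0 < r / 2 / (k + 1) by rewrite divr_gt0 //; lra.
have [q [q0 hq]] := hlim eps0.
have [b b1 hb] := scale_above q0 (fun t ts => hn (sI t ts)).
have b0 : 0 < b by lra.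
exists b => //; rewrite (G_split b0 us sI).
have hP : \sum_(t <- s) rho (b * n t) <= k * rho q.
  rewrite /k -sum_seq_const big_seq [X in _ <= X]big_seq.
  by apply: ler_sum => t ts; apply: (rho_le hdec q0); exact: hb.
have htf : fine (tail 1 s) < r / 2 by rewrite -lte_fin fineK //; apply: tail_fin.
have t1 := tailf_le (@ltr01 R) b1 us sI.
have h1 : k * rho q <= k * (r / 2 / (k + 1)) by rewrite ler_wpM2l // ltW.
have h2 : k * (r / 2 / (k + 1)) = r / 2 - r / 2 / (k + 1) by field; lra.
lra.
Qed.

Lemma G_root (r : R) : 0 < r -> exists lam, 0 < lam /\ G lam = r.
Proof.
move=> r0; have [a a0 ha] := G_small r; have [b b0 hb] := G_large r0.
have ab : a <= b.
  rewrite leNgt; apply/negP => ba; have := G_decr b0 ba; lra.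
have [c cab hc] : exists2 c, c \in `[a, b] & (fun x => G x) c = r.
  apply: IVT => //.
    apply: continuous_in_subspaceT => c; rewrite inE /= in_itv /= => /andP[ac cb].
    apply: G_cont; lra.
  rewrite ge_min le_max; apply/andP; split; apply/orP; [right|left]; lra.
move: cab; rewrite in_itv /= => /andP[ac cb].
by exists c; split => //; lra.
Qed.

End ScaledSeries.

Section LatticeSeries.
Variables (R : realType) (d : nat).
Local Notation iv k := (map_mx (fun z : int => z%:~R) k : 'rV[R]_d).

Lemma enormZ (l : R) (v : 'rV[R]_d) : enorm (l *: v) = `|l| * enorm v.
Proof.
rewrite /enorm; under eq_bigr do rewrite mxE exprMn.
by rewrite -mulr_sumr sqrtrM ?sqr_ge0 // sqrtr_sqr.
Qed.

Lemma enorm_ge0 (v : 'rV[R]_d) : 0 <= enorm v.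
Proof. exact: sqrtr_ge0. Qed.

Lemma enorm_coord (v : 'rV[R]_d) i : `|v 0 i| <= enorm v.
Proof.
rewrite /enorm -sqrtr_sqr ler_sqrt; last by apply: sumr_ge0 => j _; exact: sqr_ge0.
rewrite (bigD1 i) //= lerDl; apply: sumr_ge0 => j _; exact: sqr_ge0.
Qed.

Lemma enorm_gt0 (v : 'rV[R]_d) : v != 0 -> 0 < enorm v.
Proof.
move=> /row_nz_coord [i hi].
by apply: (lt_le_trans _ (enorm_coord v i)); rewrite normr_gt0.
Qed.

Lemma int_row0 : iv 0 = 0.
Proof. by apply/matrixP => i j; rewrite !mxE. Qed.

Lemma lattice_coord_inj (M : 'M[R]_d) : M \in unitmx ->
  injective (fun k : 'rV[int]_d => iv k *m M).
Proof.
move=> uM k k' /(congr1 (mulmx^~ (invmx M))); rewrite !mulmxK // => h.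
apply/matrixP => i j; have := congr1 (fun m : 'rV[R]_d => m i j) h.
by rewrite !mxE => /intr_inj.
Qed.

Lemma lattice_coord_nz (M : 'M[R]_d) (k : 'rV[int]_d) :
  M \in unitmx -> k != 0 -> iv k *m M != 0.
Proof.
move=> uM; apply: contra => /eqP h; apply/eqP; apply: (lattice_coord_inj uM).
by rewrite /= h int_row0 mul0mx.
Qed.

Lemma Epot_lattice (rho : R -> R) (M : 'M[R]_d) (lam : R) :
  (forall r, 0 < r -> 0 <= rho r) -> M \in unitmx -> 0 < lam ->
  Epot rho (scale_set lam (lattice_of M)) =
  fine (\esum_(k in [set k : 'rV[int]_d | k != 0]) (rho (lam * enorm (iv k *m M)))%:E).
Proof.
move=> hr uM l0; rewrite /Epot.
rewrite [X in _ - fine X]esum1 ?subr0; last first.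
  move=> x [_ /= hx]; rewrite max_r // oppr_le0 hr // enorm_gt0 //.
  by apply/eqP => h; apply: hx.
congr fine.
rewrite (reindex_esum [set k : 'rV[int]_d | k != 0] _ (fun k => lam *: (iv k *m M))).
  apply: eq_esum => k /= k0.
  rewrite enormZ ger0_norm ?ltW // max_l // hr // mulr_gt0 // enorm_gt0 //.
  exact: lattice_coord_nz.
split.
- move=> k /= k0; split; first by exists (iv k *m M) => //; exists k.
  by move=> /= /eqP; rewrite scaler_eq0 gt_eqF //= (negbTE (lattice_coord_nz uM k0)).
- move=> k k' _ _ /= h; apply: (lattice_coord_inj uM); apply: (scalerI _ h).
  by rewrite gt_eqF.
- move=> x [[q [k ->] <-] /= hx]; exists k => //=.
  apply/eqP => k0; apply: hx.
  by rewrite k0 int_row0 mul0mx scaler0.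
Qed.

End LatticeSeries.

(* Part 2b: the weights (m + 1)^(-s), s > 1, have uniformly bounded partial
   sums (Cauchy condensation: the block [2^j - 1, 2^(j+1) - 1) contributes at
   most q^j with q = 2^(1-s) < 1). *)
Section Condensation.
Variables (R : realType) (s : R).
Hypothesis s1 : 1 < s.

Definition gs (m : nat) : R := ((m%:R + 1) `^ s)^-1.

Lemma gs_gt0 m : 0 < gs m.
Proof. by rewrite /gs invr_gt0 powR_gt0 // ltr_wpDl. Qed.

Lemma gs_le (m m' : nat) : (m <= m')%N -> gs m' <= gs m.
Proof.
move=> mm'; rewrite /gs lef_pV2 ?posrE ?powR_gt0 ?ltr_wpDl //.
apply: ge0_ler_powR; rewrite ?nnegrE ?addr_ge0 //; first exact: ltW (lt_trans ltr01 s1).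
by rewrite lerD2r ler_nat.
Qed.

Let q := 2 `^ (1 - s).

Lemma q_gt0 : 0 < q. Proof. by rewrite powR_gt0. Qed.

Lemma q_lt1 : q < 1.
Proof.
have l2 : 0 < ln (2 : R) by apply: ln_gt0; lra.
have h : ln q < 0.
  rewrite /q ln_powR (_ : 1 - s = - (s - 1)); last by ring.
  by rewrite mulNr oppr_lt0 mulr_gt0 // subr_gt0.
by rewrite -(lnK (x := q)) ?posrE ?q_gt0 // expR_lt1.
Qed.

(* The mass of a block: 2^j terms, each at most gs (2^j - 1). *)
Lemma gs_pow2 (j : nat) : (2 ^ j)%:R * gs (2 ^ j - 1) = q ^+ j.
Proof.
rewrite /gs natrB ?expn_gt0 // subrK natrX.
have x0 : 0 < (2 : R) ^+ j by rewrite exprn_gt0.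
rewrite -[X in X * _](@powRr1 _ (2 ^+ j)) ?ltW // -powRB; last by rewrite (gt_eqF x0) /= implybT.
rewrite -powR_mulrn ?ler0n // -powRrM mulrC powRrM powR_mulrn // ltW //.
Qed.

Lemma sum_dyadic (J : nat) : \sum_(0 <= m < 2 ^ J - 1) gs m <= \sum_(j < J) q ^+ j.
Proof.
elim: J => [|J IH]; first by rewrite expn0 subnn big_geq // big_ord0.
rewrite big_ord_recr /= (big_cat_nat _ (n := 2 ^ J - 1)) //=; last first.
  by rewrite leq_sub2r // leq_exp2l.
apply: lerD => //.
have hsz : size (index_iota (2 ^ J - 1) (2 ^ J.+1 - 1)) = (2 ^ J)%N.
  by rewrite size_iota expnS; have := expn_gt0 2 J; lia.
rewrite -gs_pow2; set c := gs (2 ^ J - 1).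
rewrite -[X in X%:R * c]hsz -sum_seq_const big_seq [X in _ <= X]big_seq.
by apply: ler_sum => m; rewrite mem_index_iota => /andP[h _]; exact: gs_le.
Qed.

Lemma geom_le (J : nat) : \sum_(j < J) q ^+ j <= (1 - q)^-1.
Proof.
have q1 : 0 < 1 - q by have := q_lt1; lra.
have hJ : 0 <= q ^+ J by rewrite exprn_ge0 // ltW // q_gt0.
rewrite -div1r ler_pdivlMr //.
have -> : (\sum_(i < J) q ^+ i) * (1 - q) = 1 - q ^+ J.
  rewrite mulrC (_ : 1 - q = - (q - 1)); last by ring.
  by rewrite mulNr -subrX1; ring.
lra.
Qed.

(* Every partial sum lies inside some dyadic block sum. *)
Lemma gs_sum_le (M : nat) : \sum_(0 <= m < M) gs m <= (1 - 2 `^ (1 - s))^-1.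
Proof.
have hM : (M <= 2 ^ M - 1)%N by have := ltn_expl M (isT : (1 < 2)%N); lia.
apply: (le_trans _ (geom_le M)); apply: (le_trans _ (sum_dyadic M)).
rewrite (big_cat_nat _ (n := M) (p := 2 ^ M - 1)) //= lerDl.
by apply: sumr_ge0 => m _; apply: ltW; apply: gs_gt0.
Qed.

End Condensation.

(* Part 2c: the product weights prod_i (|k_i| + 1)^(-s) over any finite set of
   integer vectors sum to at most (2 Z_s)^d, Z_s the condensation bound. *)
Section ProductWeights.
Variables (R : realType) (s : R).
Hypothesis s1 : 1 < s.

Definition fz (z : int) : R := gs s `|z|%N.
Local Notation Zs := ((1 - 2 `^ (1 - s))^-1).

Lemma fz_ge0 z : 0 <= fz z.
Proof. exact/ltW/gs_gt0. Qed.

Lemma window_sum_le (N : nat) : \sum_(j < N.+1 + N) fz (j%:Z - N%:Z) <= 2 * Zs.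
Proof.
rewrite big_split_ord /= mulr2n mulrDl mul1r; apply: lerD.
  rewrite (reindex_inj rev_ord_inj) /=.
  rewrite (eq_bigr (fun i : 'I_N.+1 => gs s i)); last first.
    move=> i _; rewrite /fz distnEr; last by lia.
    by congr gs; have := ltn_ord i; lia.
  by rewrite -(big_mkord xpredT (fun i => gs s i)); apply: gs_sum_le.
rewrite (eq_bigr (fun i : 'I_N => gs s i.+1)); last first.
  move=> i _; rewrite /fz distnEl; last by lia.
  by congr (gs _ _); lia.
apply: (le_trans _ (gs_sum_le s1 N.+1)).
rewrite big_mkord big_ord_recl lerDr; exact/ltW/gs_gt0.
Qed.

Lemma box_sum_le (d N : nat) :
  \sum_(g : {ffun 'I_d -> 'I_(N.+1 + N)}) \prod_(i < d) fz ((g i)%:Z - N%:Z)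
  <= (2 * Zs) ^+ d.
Proof.
rewrite -(bigA_distr_bigA (fun (i : 'I_d) (j : 'I_(N.+1 + N)) => fz (j%:Z - N%:Z))) /=.
have -> : (2 * Zs) ^+ d = \prod_(i < d) (2 * Zs) by rewrite prodr_const card_ord.
apply: ler_prod => i _; apply/andP; split; last exact: window_sum_le.
by apply: sumr_ge0 => j _; exact: fz_ge0.
Qed.

Lemma finite_in_box (d : nat) (X : set 'rV[int]_d) : finite_set X ->
  exists N : nat, forall k, X k -> forall i, (`|k ord0 i| <= N)%N.
Proof.
move=> finX.
exists (\sum_(k <- finmap.enum_fset (fset_set X)) \sum_(i < d) `|k ord0 i|%N)%N.
move=> k Xk i.
have kin : k \in finmap.enum_fset (fset_set X) by rewrite in_fset_set // inE.
rewrite (big_rem k kin) /=; apply: leq_trans (leq_addr _ _).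
by rewrite (bigD1 i) //= leq_addr.
Qed.

Lemma finite_weight_sum (d : nat) (X : set 'rV[int]_d) : finite_set X ->
  (\sum_(k \in X) (\prod_(i < d) fz (k 0 i))%:E <= ((2 * Zs) ^+ d)%:E)%E.
Proof.
move=> finX; have [N hN] := finite_in_box finX.
pose phi (g : {ffun 'I_d -> 'I_(N.+1 + N)}) : 'rV[int]_d := \row_i ((g i)%:Z - N%:Z).
have XP : X `<=` range phi.
  move=> k Xk.
  have hg : forall i, (`|(k 0 i + N%:Z)%R|%N < N.+1 + N)%N.
    by move=> i; have := hN k Xk i; change (k 0 i) with (k ord0 i); lia.
  exists [ffun i => Ordinal (hg i)] => //.
  apply/matrixP => a b; rewrite (ord1 a) mxE ffunE /=.
  by have := hN k Xk b; change (k 0 b) with (k ord0 b); lia.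
have phi_inj : set_inj [set: {ffun 'I_d -> 'I_(N.+1 + N)}] phi.
  move=> g g' _ _ h; apply/ffunP => i; apply/val_inj.
  by have := congr1 (fun m : 'rV[int]_d => m 0 i) h; rewrite /phi !mxE /=; lia.
have setTE : [set: {ffun 'I_d -> 'I_(N.+1 + N)}] = [set` enum {ffun 'I_d -> 'I_(N.+1 + N)}].
  by apply/seteqP; split => g //= _; rewrite mem_enum.
apply: (le_trans (lee_fsum_nneg_subset finX (finite_image _ finite_finset) _ _)).
- by move=> k /set_mem /XP; exact: mem_set.
- by move=> k _; rewrite lee_fin; apply: prodr_ge0 => i _; exact: fz_ge0.
rewrite fsbig_image // setTE -fsbig_seq ?enum_uniq // big_enum /= sumEFin lee_fin.
apply: le_trans (box_sum_le d N); apply: ler_sum => g _.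
by apply: ler_prod => i _; rewrite fz_ge0 /= /phi mxE.
Qed.

End ProductWeights.

Lemma prod_powR (R : realType) (d : nat) (x : 'I_d -> R) (r : R) :
  (forall i, 0 <= x i) -> \prod_(i < d) (x i `^ r) = (\prod_(i < d) x i) `^ r.
Proof.
move=> h; suff [] : \prod_(i < d) (x i `^ r) = (\prod_(i < d) x i) `^ r /\
    0 <= \prod_(i < d) x i by [].
apply: (big_ind2 (fun a b => a = b `^ r /\ 0 <= b)).
- by rewrite powR1.
- by move=> a1 b1 a2 b2 [-> h1] [-> h2]; split; [rewrite powRM | exact: mulr_ge0].
- by move=> i _; split.
Qed.

Section LatticeSummability.
Variables (R : realType) (d : nat) (M : 'M[R]_d) (rho : R -> R) (eta C A : R).
Hypothesis hd : (1 <= d)%N.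
Hypothesis uM : M \in unitmx.
Hypothesis hrho0 : forall r, 0 < r -> 0 <= rho r.
Hypothesis hdec : forall x y, 0 < x -> x < y -> rho y < rho x.
Hypothesis eta0 : 0 < eta.
Hypothesis hdecay : forall r, 0 < r -> A <= r -> `|rho r| <= C * r `^ (- (d%:R + eta)).

Local Notation iv k := (map_mx (fun z : int => z%:~R) k : 'rV[R]_d).
Local Notation u k := (enorm (iv k *m M)).
Local Notation p := (d%:R + eta).
Local Notation s := (p / d%:R).

(* Integer coordinates are controlled by the length |kM|: |k_i| <= Bc |kM|. *)
Definition Bc : R := 1 + \sum_(i < d) \sum_(j < d) `|invmx M j i|.

Lemma Bc_ge1 : 1 <= Bc.
Proof. by rewrite /Bc lerDl; apply: sumr_ge0 => i _; apply: sumr_ge0. Qed.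

Lemma coord_bound (k : 'rV[int]_d) i : `|(k 0 i)%:~R : R| <= Bc * u k.
Proof.
have -> : ((k 0 i)%:~R : R) = (iv k *m M *m invmx M) 0 i by rewrite mulmxK // mxE.
rewrite mxE; apply: (le_trans (ler_norm_sum _ _ _)).
apply: (@le_trans _ _ (\sum_j u k * `|invmx M j i|)).
  by apply: ler_sum => j _; rewrite normrM ler_wpM2r // enorm_coord.
rewrite -mulr_sumr mulrC ler_wpM2r ?enorm_ge0 // /Bc [X in _ <= 1 + X](bigD1 i) //=.
have : 0 <= \sum_(i0 < d | i0 != i) \sum_(j < d) `|invmx M j i0|.
  by apply: sumr_ge0 => i' _; apply: sumr_ge0.
lra.
Qed.

Lemma one_le_Bu (k : 'rV[int]_d) : k != 0 -> 1 <= Bc * u k.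
Proof.
move=> /row_nz_coord [i hi]; apply: le_trans (coord_bound k i).
by rewrite -intr_norm ler1z; move: hi; set m := k 0 i; lia.
Qed.

Lemma d_gt0 : 0 < d%:R :> R.
Proof. by rewrite ltr0n. Qed.

Lemma s_gt1 : 1 < s.
Proof. rewrite ltr_pdivlMr ?d_gt0 // mul1r; have := eta0; lra. Qed.

(* rho(r) <= K0 a r^(-p) for all r >= a / Bc: the decay bound beyond A, and
   monotonicity of rho on [a / Bc, A]. *)
Definition K0 (a : R) : R := Num.max C (rho (a / Bc) * A `^ p).

Lemma K0_ge0 a : 0 < a -> 0 <= K0 a.
Proof.
move=> a0; have Bc0 : 0 < Bc by have := Bc_ge1; lra.
rewrite /K0 le_max; apply/orP; right; apply: mulr_ge0; last exact: powR_ge0.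
by apply: hrho0; rewrite divr_gt0.
Qed.

Lemma rho_le_power (a : R) (k : 'rV[int]_d) : 0 < a -> k != 0 ->
  rho (a * u k) <= K0 a * ((a * u k) `^ p)^-1.
Proof.
move=> a0 k0; have Bc0 : 0 < Bc by have := Bc_ge1; lra.
have hB := one_le_Bu k0.
have uk0 : 0 < u k by apply/enorm_gt0/lattice_coord_nz.
have au0 : 0 < a * u k by rewrite mulr_gt0.
have X0 : 0 < (a * u k) `^ p by rewrite powR_gt0.
case: (leP A (a * u k)) => hA.
  have := hdecay au0 hA; rewrite powRN => h.
  apply: (le_trans (ler_norm _)); apply: (le_trans h).
  by apply: ler_wpM2r; [rewrite invr_ge0 ltW | rewrite /K0 le_max lexx].
have h1 : rho (a * u k) <= rho (a / Bc).
  apply: (rho_le hdec); first by rewrite divr_gt0.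
  rewrite ler_pdivrMr //; nra.
apply: (le_trans h1).
have hr : 0 <= rho (a / Bc) by apply: hrho0; rewrite divr_gt0.
have hAp : (a * u k) `^ p <= A `^ p.
  apply: ge0_ler_powR; rewrite ?nnegrE; [have := eta0; have := d_gt0; lra|exact: ltW|lra|lra].
apply: (@le_trans _ _ (rho (a / Bc) * A `^ p * ((a * u k) `^ p)^-1)).
  by rewrite -mulrA; apply: ler_peMr => //; rewrite ler_pdivlMr // mul1r.
by apply: ler_wpM2r; [rewrite invr_ge0 ltW | rewrite /K0 le_max lexx orbT].
Qed.

Lemma coord_prod_le (k : 'rV[int]_d) : k != 0 ->
  \prod_(i < d) ((`|k ord0 i|%N)%:R + 1 : R) <= (2 * Bc * u k) ^+ d.
Proof.
move=> k0; have hB := one_le_Bu k0.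
set c := 2 * Bc * u k.
have -> : c ^+ d = \prod_(i < d) c by rewrite prodr_const card_ord.
apply: ler_prod => i _; apply/andP; split; first by rewrite addr_ge0.
rewrite natr_absz intr_norm /c; have := coord_bound k i; lra.
Qed.

Lemma power_le_weight (a : R) (k : 'rV[int]_d) : 0 < a -> k != 0 ->
  ((a * u k) `^ p)^-1 <= (2 * Bc / a) `^ p * \prod_(i < d) fz s (k 0 i).
Proof.
move=> a0 k0; have Bc0 : 0 < Bc by have := Bc_ge1; lra.
have hB := one_le_Bu k0.
have uk0 : 0 < u k by apply/enorm_gt0/lattice_coord_nz.
pose x (i : 'I_d) : R := (`|k ord0 i|%N)%:R + 1.
have x1 i : 1 <= x i by rewrite /x lerDr ler0n.
have P0 : 0 < \prod_(i < d) x i by apply: prodr_gt0 => i _; have := x1 i; lra.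
have -> : \prod_(i < d) fz s (k 0 i) = ((\prod_(i < d) x i) `^ s)^-1.
  rewrite -prod_powR; first by rewrite -prodfV.
  by move=> i; have := x1 i; lra.
have hPs : (\prod_(i < d) x i) `^ s <= (2 * Bc * u k) `^ p.
  apply: le_trans (ge0_ler_powR _ _ _ (coord_prod_le k0)) _; rewrite ?nnegrE.
  - by have := s_gt1; lra.
  - exact: ltW.
  - by rewrite exprn_ge0 //; nra.
  rewrite -powR_mulrn; last by nra.
  by rewrite -powRrM (_ : d%:R * (p / d%:R) = p) //; field; have := d_gt0; lra.
set Q := (2 * Bc / a) `^ p.
have e : (2 * Bc * u k) `^ p = Q * (a * u k) `^ p.
  rewrite /Q -powRM; last by rewrite ltW ?mulr_gt0.
    by congr (_ `^ _); field; lra.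
  by rewrite divr_ge0 //; lra.
have Q0 : 0 < Q by rewrite powR_gt0 // divr_gt0 //; lra.
rewrite ler_pdivlMr ?powR_gt0 // ler_pdivrMl ?powR_gt0 ?mulr_gt0 //.
by rewrite [X in _ <= X]mulrC -e.
Qed.

Lemma lattice_sum_finite (a : R) : 0 < a ->
  (\esum_(k in [set k : 'rV[int]_d | k != 0%R]) (rho (a * u k))%:E < +oo)%E.
Proof.
move=> a0; have Bc0 : 0 < Bc by have := Bc_ge1; lra.
pose K := K0 a * (2 * Bc / a) `^ p.
have K_ge0 : 0 <= K by rewrite mulr_ge0 ?K0_ge0 ?powR_ge0.
have term_bound : forall k : 'rV[int]_d, k != 0 -> rho (a * u k) <= K * \prod_(i < d) fz s (k 0 i).
  move=> k k0; apply: (le_trans (rho_le_power a0 k0)).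
  rewrite -mulrA; apply: ler_wpM2l; [exact: K0_ge0 | exact: power_le_weight].
apply: (@le_lt_trans _ _ ((K * (2 * (1 - 2 `^ (1 - s))^-1) ^+ d)%:E)); last by rewrite ltry.
apply: ge_ereal_sup => _ [X [finX XI] <-].
rewrite fsbig_finite // sumEFin lee_fin.
apply: (@le_trans _ _ (\sum_(k <- finmap.enum_fset (fset_set X)) K * \prod_(i < d) fz s (k 0 i))).
  rewrite big_seq [X in _ <= X]big_seq; apply: ler_sum => k.
  by rewrite in_fset_set // inE => /XI /= k0; exact: term_bound.
rewrite -mulr_sumr; apply: ler_wpM2l => //.
by have := finite_weight_sum s_gt1 finX; rewrite fsbig_finite // sumEFin lee_fin.
Qed.

End LatticeSummability.

Section LatticeEnergy.
Variables (R : realType) (d : nat) (rho : R -> R) (eta C A : R).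
Hypothesis hd : (1 <= d)%N.
Hypothesis hrho0 : forall r, 0 < r -> 0 <= rho r.
Hypothesis hdec : forall x y, 0 < x -> x < y -> rho y < rho x.
Hypothesis hcont : {within `]0, +oo[, continuous rho}.
Hypothesis eta0 : 0 < eta.
Hypothesis hdecay : forall r, 0 < r -> A <= r -> `|rho r| <= C * r `^ (- (d%:R + eta)).

Local Notation iv k := (map_mx (fun z : int => z%:~R) k : 'rV[R]_d).

(* The decay bound forces rho(r) -> 0: rho(r) <= |C| / r for r >= max(A, 1). *)
Lemma rho_vanishes e : 0 < e -> exists r, 0 < r /\ rho r < e.
Proof.
move=> e0; pose r := Num.max A 1 + `|C| / e + 1.
have hC : 0 <= `|C| / e by rewrite divr_ge0 // ltW.
have hm1 : 1 <= Num.max A 1 by rewrite le_max lexx orbT.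
have hmA : A <= Num.max A 1 by rewrite le_max lexx.
have r1 : 1 <= r by rewrite /r; lra.
have r0 : 0 < r by lra.
exists r; split => //.
have hrp : r <= r `^ (d%:R + eta).
  apply: le1r_powR => //; have : 1 <= d%:R :> R by rewrite ler1n.
  by have := eta0; lra.
have rp0 : 0 < r `^ (d%:R + eta) by rewrite powR_gt0.
have rA : A <= r by rewrite /r; lra.
have h := hdecay r0 rA; rewrite powRN in h.
have h2 : C * (r `^ (d%:R + eta))^-1 <= `|C| * r^-1.
  have hi : (r `^ (d%:R + eta))^-1 <= r^-1 by rewrite lef_pV2 ?posrE.
  have hi0 : 0 <= (r `^ (d%:R + eta))^-1 by rewrite invr_ge0 ltW.
  have := ler_norm C; have := normr_ge0 C; nra.
have h3 : `|C| * r^-1 < e.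
  by rewrite ltr_pdivrMr // mulrC -ltr_pdivrMr //; rewrite /r; lra.
by apply: (le_lt_trans (ler_norm _)); apply: (le_lt_trans h); exact: le_lt_trans h2 h3.
Qed.

Definition e1 : 'rV[int]_d := delta_mx 0 (Ordinal hd).

Lemma scale_e1 (c : int) : (c *: e1) 0 (Ordinal hd) = c.
Proof. by rewrite !mxE !eqxx mulr1. Qed.

Lemma e1_neq0 : e1 != 0.
Proof. by apply/eqP => h; have := scale_e1 1; rewrite scale1r h mxE. Qed.

(* The multiples e1, 2 e1, ..., N e1 give N lattice points of length <= N |e1 M|. *)
Lemma many_short_points (M : 'M[R]_d) : M \in unitmx -> forall N : nat,
  exists s : seq 'rV[int]_d, [/\ uniq s, size s = N,
    (forall t, t \in s -> t != 0) &
    exists c, 0 < c /\ forall t, t \in s -> enorm (iv t *m M) <= c].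
Proof.
move=> uM N; have u0 := enorm_gt0 (lattice_coord_nz uM e1_neq0).
exists [seq (j.+1)%:Z *: e1 | j <- iota 0 N]; split.
- rewrite map_inj_uniq ?iota_uniq // => j j' /(congr1 (fun m : 'rV[int]_d => m 0 (Ordinal hd))).
  by rewrite /= !scale_e1 => -[].
- by rewrite size_map size_iota.
- move=> t /mapP[j _ ->]; apply/eqP => h.
  by have := scale_e1 (j.+1)%:Z; rewrite h mxE.
exists (N%:R * enorm (iv e1 *m M) + 1); split; first by have : 0 <= N%:R :> R by []; nra.
move=> t /mapP[j]; rewrite mem_iota add0n => /andP[_ jN] ->.
have -> : iv ((j.+1)%:Z *: e1) = (j.+1)%:R *: iv e1.
  by apply/matrixP => i k; rewrite !mxE intrM.
rewrite -scalemxAl enormZ ger0_norm //.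
have : (j.+1)%:R <= N%:R :> R by rewrite ler_nat.
nra.
Qed.

Lemma lattice_energy_profile (M : 'M[R]_d) : M \in unitmx ->
  [/\ forall mu, 0 < mu -> 0 < Epot rho (scale_set mu (lattice_of M)),
      forall mu nu, 0 < mu -> mu < nu ->
        Epot rho (scale_set nu (lattice_of M)) < Epot rho (scale_set mu (lattice_of M)) &
      forall r, 0 < r -> exists lam, 0 < lam /\ Epot rho (scale_set lam (lattice_of M)) = r].
Proof.
move=> uM.
pose I := [set k : 'rV[int]_d | k != 0].
pose n (k : 'rV[int]_d) := enorm (iv k *m M).
have hn : forall k, I k -> 0 < n k by move=> k k0; exact/enorm_gt0/lattice_coord_nz.
have hsum := lattice_sum_finite hd uM hrho0 hdec eta0 hdecay.
have hI0 : exists t0, I t0 by exists e1; exact: e1_neq0.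
have hinf : forall N : nat, exists s, [/\ uniq s, size s = N, (forall t, t \in s -> I t) &
    exists c, 0 < c /\ forall t, t \in s -> n t <= c].
  by move=> N; have [s [? ? ? ?]] := many_short_points uM N; exists s.
have E_G mu : 0 < mu -> Epot rho (scale_set mu (lattice_of M)) =
    fine (\esum_(t in I) (rho (mu * n t))%:E) by move=> mu0; rewrite Epot_lattice.
split.
- by move=> mu mu0; rewrite E_G //; exact: (G_gt0 hn hrho0 hdec hsum hI0).
- move=> mu nu mu0 munu; rewrite !E_G //; last lra.
  exact: (G_decr hn hrho0 hdec hsum hI0).
- move=> r r0; have [lam [l0 hl]] := G_root hn hrho0 hdec hsum hI0 hcont hinf rho_vanishes r0.
  by exists lam; split => //; rewrite E_G.
Qed.

End LatticeEnergy.

Section OneWell.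
Variables (R : realType) (F : R -> R) (r0 : R).
Hypothesis hFc : {within `]0, +oo[, continuous F}.
Hypothesis hr0 : 0 < r0.
Hypothesis hFdec : forall x y, 0 < x -> x < y -> y < r0 -> F y < F x.
Hypothesis hFinc : forall x y, r0 < x -> x < y -> F x < F y.

Lemma F_cont_well : {for r0, continuous F}.
Proof.
move: hFc; rewrite continuous_open_subspace; last exact: interval_open.
by apply; rewrite inE /= in_itv /= hr0.
Qed.

(* F(r0) is the limit of the values F(z) < F(m), z in (m, r0). *)
Lemma well_le_left m : 0 < m -> m < r0 -> F r0 <= F m.
Proof.
move=> m0 mr; apply: (cvgr_to_le (cvg_at_left_filter F_cont_well)).
by near=> z; apply/ltW/hFdec.
Unshelve. all: by end_near.
Qed.

(* F(r0) is the limit of the values F(z) < F(m), z in (r0, m). *)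
Lemma well_le_right m : r0 < m -> F r0 <= F m.
Proof.
move=> mr; apply: (cvgr_to_le (cvg_at_right_filter F_cont_well)).
by near=> z; apply/ltW/hFinc.
Unshelve. all: by end_near.
Qed.

(* Strict minimum: compare F(r) with F at the midpoint m between r and r0. *)
Lemma one_well_min r : 0 < r -> r != r0 -> F r0 < F r.
Proof.
move=> r_gt0 rne; have m_gt0 : 0 < (r + r0) / 2 by have := hr0; lra.
case: (ltgtP r r0) => [hr|hr|hr]; last by rewrite hr eqxx in rne.
all: set m := (r + r0) / 2 in m_gt0 *.
- have := well_le_left m_gt0 (ltac:(rewrite /m; lra) : m < r0).
  have := hFdec r_gt0 (ltac:(rewrite /m; lra) : r < m) (ltac:(rewrite /m; lra) : m < r0); lra.
- have := well_le_right (ltac:(rewrite /m; lra) : r0 < m).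
  have := hFinc (ltac:(rewrite /m; lra) : r0 < m) (ltac:(rewrite /m; lra) : m < r); lra.
Qed.

Lemma one_well_le r : 0 < r -> F r0 <= F r.
Proof.
move=> r_gt0; case: (eqVneq r r0) => [-> //|rne].
exact/ltW/one_well_min.
Qed.

End OneWell.

(* The optimal scaling lam_L is the level-r0 point of the decreasing energy
   profile; unique minimality transfers from L |-> E_rho[lam_Ld L] to lam. *)
Section Scaling.
Variables (R : realType) (d : nat) (rho : R -> R) (r0 : R) (lam : set 'rV[R]_d -> R).
Local Notation E L mu := (Epot (d := d) rho (scale_set mu L)).
Hypothesis hdecE : forall L, is_lattice1 L ->
  forall mu nu, 0 < mu -> mu < nu -> E L nu < E L mu.
Hypothesis hlam : forall L, is_lattice1 L -> 0 < lam L /\ E L (lam L) = r0.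

Lemma scaling_unique L mu : is_lattice1 L -> 0 < mu -> E L mu = r0 -> mu = lam L.
Proof.
move=> hL mu0 hE; have [l0 lE] := hlam hL.
case: (ltgtP mu (lam L)) => // h;
  [have := hdecE hL mu0 h | have := hdecE hL l0 h]; rewrite hE lE; lra.
Qed.

(* If lam_L < lam_Ld then r0 = E_rho[lam_Ld Ld] <= E_rho[lam_Ld L] < E_rho[lam_L L] = r0. *)
Lemma unique_min_transfer Ld :
  unique_min_lattice1 (fun L => E L (lam Ld)) Ld -> unique_min_lattice1 lam Ld.
Proof.
move=> [hLd [hmin huniq]]; have [l0d lEd] := hlam hLd.
split => //; split.
  move=> L hL; have [l0 lE] := hlam hL; rewrite leNgt; apply/negP => hlt.
  have := hdecE hL l0 hlt; have := hmin L hL; rewrite /= lEd lE; lra.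
move=> L hL hl; apply: huniq => //=; have [_ lE] := hlam hL.
by rewrite lEd -hl lE.
Qed.

End Scaling.

Theorem theorem3p1 (R : realType) (d : nat) (hd : (1 <= d)%N)
  (F : R -> R) (r0 : R) (rho : R -> R)
  (hFc : {within `]0, +oo[, continuous F})
  (hr0 : 0 < r0)
  (hFdec : forall x y, 0 < x -> x < y -> y < r0 -> F y < F x)
  (hFinc : forall x y, r0 < x -> x < y -> F x < F y)
  (hrhoc : {within `]0, +oo[, continuous rho})
  (hrho0 : forall r, 0 < r -> 0 <= rho r)
  (hrhodec : forall x y, 0 < x -> x < y -> rho y < rho x)
  (hrhodecay : exists eta : R, 0 < eta /\ exists C : R, exists A : R,
      forall r, 0 < r -> A <= r -> `|rho r| <= C * r `^ (- (d%:R + eta))) :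
  exists lam : set 'rV[R]_d -> R,
    (forall L, is_lattice1 L ->
       0 < lam L /\
       (forall mu, 0 < mu -> mu != lam L ->
          F (Epot rho (scale_set (lam L) L)) < F (Epot rho (scale_set mu L))) /\
       F (Epot rho (scale_set (lam L) L)) = F r0 /\
       (forall r, 0 < r -> F r0 <= F r)) /\
    (forall Ld, unique_min_lattice1 (fun L => Epot rho (scale_set (lam Ld) L)) Ld ->
       unique_min_lattice1 lam Ld).
Proof.
have [eta [eta0 [C [A hdecay]]]] := hrhodecay.
have profile (L : set 'rV[R]_d) : is_lattice1 L -> [/\
    forall mu, 0 < mu -> 0 < Epot rho (scale_set mu L),
    forall mu nu, 0 < mu -> mu < nu -> Epot rho (scale_set nu L) < Epot rho (scale_set mu L) &
    exists lam, 0 < lam /\ Epot rho (scale_set lam L) = r0].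
  move=> [M [hdet ->]].
  have uM : M \in unitmx by rewrite unitmxE unitfE -normr_eq0 hdet oner_neq0.
  have [Epos Edec Eonto] := lattice_energy_profile hd hrho0 hrhodec hrhoc eta0 hdecay uM.
  by split => //; exact: Eonto.
pose lam (L : set 'rV[R]_d) := xget 1 [set l : R | 0 < l /\ Epot rho (scale_set l L) = r0].
have hlam (L : set 'rV[R]_d) : is_lattice1 L -> 0 < lam L /\ Epot rho (scale_set (lam L) L) = r0.
  by move=> /profile[_ _ root]; exact: (xgetPex 1 root).
have hdecE (L : set 'rV[R]_d) : is_lattice1 L -> forall mu nu, 0 < mu -> mu < nu ->
    Epot rho (scale_set nu L) < Epot rho (scale_set mu L) by move=> /profile[].
exists lam; split; last exact: (unique_min_transfer hdecE hlam).
move=> L hL; have [l0 lE] := hlam L hL; have [Epos _ _] := profile L hL.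
rewrite lE; do !split => //; last exact: one_well_le hFc hr0 hFdec hFinc.
move=> mu mu0 mune; apply: (one_well_min hFc hr0 hFdec hFinc (Epos _ mu0)).
by apply: contra_neq mune => /(scaling_unique hdecE hlam hL mu0).
Qed.
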